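(* Let $q\in\mathrm{prob}(\{0,1\}^2)$. Then $E_\le:=\{\chi^{(1)}_{1|1}:(\pi,\chi)\in\Theta_2,\ \mu(\pi,\chi)=q,\ \chi^{(1)}_{0|0}\le\chi^{(2)}_{0|0}\}\subseteq\left[0,\min\left\{\frac{q_{1+}}{q_{+1}},1\right\}\right]$, with the conventions $x/0:=\infty$ for $x>0$ and $\frac{q_{1+}}{q_{+1}}:=1$ in the case $q_{1+}=q_{+1}=0$ (equivalently $q_{00}=1$).
   Context: A subscript $+$ denotes summation over the replaced index: $q_{1+}=q_{10}+q_{11}$, $q_{+1}=q_{01}+q_{11}$. $\mathrm{prob}(\mathcal{X})$ is the set of probability densities on a finite set $\mathcal{X}$; $\mathrm{markov}(\mathcal{X},\mathcal{Y})$ the set of maps $(x,y)\mapsto p_{y|x}$ with $p_{\cdot|x}\in\mathrm{prob}(\mathcal{Y})$. $\Theta_2:=\mathrm{prob}(\{0,1\})\times\mathrm{markov}(\{0,1\},\{0,1\}^2)$, $\mu(\pi,\chi)_j:=\sum_{i=0}^1\pi_i\chi_{j|i}$ for $j\in\{0,1\}^2$, $\chi^{(1)}_{\iota|i}:=\chi_{\iota0|i}+\chi_{\iota1|i}$, $\chi^{(2)}_{\iota|i}:=\chi_{0\iota|i}+\chi_{1\iota|i}$. *)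

(* {0,1} is encoded as bool (0 = false, 1 = true),
   {0,1}^2 as bool * bool with j = (j1, j2). *)
From mathcomp Require Import all_boot all_order all_algebra.
Set Implicit Arguments. Unset Strict Implicit. Unset Printing Implicit Defensive.
Import Order.TTheory GRing.Theory Num.Theory.
Local Open Scope ring_scope.

Section Defs.
Variable R : realFieldType.

Definition is_prob (X : finType) (p : X -> R) : Prop :=
  (forall x, 0 <= p x) /\ \sum_(x : X) p x = 1.

Definition is_markov (X Y : finType) (k : X -> Y -> R) : Prop :=
  forall x, is_prob (k x).

Definition in_Theta2 (pi : bool -> R) (chi : bool -> bool * bool -> R) : Prop :=
  is_prob pi /\ is_markov chi.

Definition mu (pi : bool -> R) (chi : bool -> bool * bool -> R) (j : bool * bool) : R :=
  \sum_(i : bool) pi i * chi i j.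

Definition chi1 (chi : bool -> bool * bool -> R) (iota i : bool) : R :=
  chi i (iota, false) + chi i (iota, true).

Definition chi2 (chi : bool -> bool * bool -> R) (iota i : bool) : R :=
  chi i (false, iota) + chi i (true, iota).

Definition q1p (q : bool * bool -> R) : R := q (true, false) + q (true, true).
Definition qp1 (q : bool * bool -> R) : R := q (false, true) + q (true, true).

Definition E_le (q : bool * bool -> R) (x : R) : Prop :=
  exists (pi : bool -> R) (chi : bool -> bool * bool -> R),
    [/\ in_Theta2 pi chi, (forall j, mu pi chi j = q j),
        chi1 chi false false <= chi2 chi false false
      & x = chi1 chi true true].

(* min{q_{1+}/q_{+1}, 1} with conventions x/0 = oo for x > 0 and
   q_{1+}/q_{+1} = 1 when q_{1+} = q_{+1} = 0: in both cases with
   q_{+1} = 0 the minimum is 1. *)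
Definition upper_bound (q : bool * bool -> R) : R :=
  if qp1 q == 0 then 1 else Num.min (q1p q / qp1 q) 1.

End Defs.

(** Write [x = χ^(1)_{1|1}].  Since [q_{+1} = Σ_i π_i χ^(2)_{1|i}] and
    [q_{1+} = Σ_i π_i χ^(1)_{1|i}], it suffices to compare the summands:
    for [i = 1], [x χ^(2)_{1|1} <= x] because [χ^(2)_{1|1} <= 1]; for [i = 0],
    the constraint [χ^(1)_{0|0} <= χ^(2)_{0|0}] is equivalent to
    [χ^(2)_{1|0} <= χ^(1)_{1|0}], and [x <= 1].  Hence [x q_{+1} <= q_{1+}]. *)

From mathcomp Require Import all_boot all_order all_algebra.
From mathcomp Require Import ring.
Import Order.TTheory GRing.Theory Num.Theory.
Local Open Scope ring_scope.

Lemma sum_prod (V : nmodType) (I J : finType) (f : I * J -> V) :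
  \sum_(p : I * J) f p = \sum_(a : I) \sum_(b : J) f (a, b).
Proof. by rewrite pair_bigA; apply: eq_bigr => -[]. Qed.

Section Marginals.
Variables (R : realFieldType) (chi : bool -> bool * bool -> R) (i : bool).
Hypothesis chi_prob : is_prob (chi i).

Lemma chi1_sum : chi1 chi false i + chi1 chi true i = 1.
Proof.
by case: chi_prob => _ <-; rewrite sum_prod big_bool /= !big_bool /chi1 /=; ring.
Qed.

Lemma chi2_sum : chi2 chi false i + chi2 chi true i = 1.
Proof.
by case: chi_prob => _ <-; rewrite sum_prod exchange_big big_bool /= !big_bool /chi2 /=; ring.
Qed.

Lemma chi1_ge0 iota : 0 <= chi1 chi iota i.
Proof. by case: chi_prob => ge0 _; rewrite addr_ge0. Qed.

Lemma chi2_ge0 iota : 0 <= chi2 chi iota i.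
Proof. by case: chi_prob => ge0 _; rewrite addr_ge0. Qed.

Lemma chi1_le1 iota : chi1 chi iota i <= 1.
Proof.
rewrite -chi1_sum; case: iota; first by rewrite lerDr chi1_ge0.
by rewrite lerDl chi1_ge0.
Qed.

Lemma chi2_le1 iota : chi2 chi iota i <= 1.
Proof.
rewrite -chi2_sum; case: iota; first by rewrite lerDr chi2_ge0.
by rewrite lerDl chi2_ge0.
Qed.

Lemma chi1_le_chi2_false :
  (chi1 chi false i <= chi2 chi false i) = (chi2 chi true i <= chi1 chi true i).
Proof.
rewrite -[chi1 chi false i](addrK (chi1 chi true i)) chi1_sum.
by rewrite -[chi2 chi false i](addrK (chi2 chi true i)) chi2_sum lerD2l lerN2.
Qed.

End Marginals.

Section MixtureMarginals.
Variables (R : realFieldType) (pi : bool -> R) (chi : bool -> bool * bool -> R).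

Lemma q1p_mu : q1p (mu pi chi) = \sum_i pi i * chi1 chi true i.
Proof. by rewrite /q1p /mu -big_split; apply: eq_bigr => i _; rewrite mulrDr. Qed.

Lemma qp1_mu : qp1 (mu pi chi) = \sum_i pi i * chi2 chi true i.
Proof. by rewrite /qp1 /mu -big_split; apply: eq_bigr => i _; rewrite mulrDr. Qed.

Hypotheses (pi_ge0 : forall i, 0 <= pi i) (chi_markov : is_markov chi).
Hypothesis chi_le : chi1 chi false false <= chi2 chi false false.

Lemma chi1_mul_qp1_le_q1p :
  chi1 chi true true * qp1 (mu pi chi) <= q1p (mu pi chi).
Proof.
rewrite q1p_mu qp1_mu mulr_sumr; apply: ler_sum => -[] _; rewrite mulrCA ler_wpM2l //.
  by rewrite ler_piMr ?chi1_ge0 ?chi2_le1.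
apply: le_trans (_ : chi2 chi true false <= _); last by rewrite -chi1_le_chi2_false.
by rewrite ler_piMl ?chi2_ge0 ?chi1_le1.
Qed.

End MixtureMarginals.

Lemma le_upper_bound (R : realFieldType) (q : bool * bool -> R) (x : R) :
  0 <= qp1 q -> x <= 1 -> x * qp1 q <= q1p q -> x <= upper_bound q.
Proof.
move=> qp1_ge0 x_le1 xq_le; rewrite /upper_bound; case: eqP => // /eqP qp1_neq0.
have qp1_gt0 : 0 < qp1 q by rewrite lt_def qp1_neq0.
by rewrite le_min x_le1 andbT ler_pdivlMr.
Qed.

Theorem lemma11 (R : realFieldType) (q : bool * bool -> R) :
  is_prob q ->
  forall x : R, E_le q x -> 0 <= x <= upper_bound q.
Proof.
move=> [q_ge0 _] x [pi [chi [[[pi_ge0 _] chi_markov] mu_q chi_le ->]]].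
have q1pE : q1p q = q1p (mu pi chi) by rewrite /q1p !mu_q.
have qp1E : qp1 q = qp1 (mu pi chi) by rewrite /qp1 !mu_q.
rewrite chi1_ge0 //=; apply: le_upper_bound.
- by rewrite /qp1 addr_ge0 ?q_ge0.
- exact: chi1_le1.
by rewrite q1pE qp1E chi1_mul_qp1_le_q1p.
Qed.
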